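(* Let $\mathcal{K}\subset\mathcal{O}_p(\mathcal{L})$ be an ideal of finite multiplicity, and suppose $f\in\mathcal{O}_p(\mathcal{L})$ satisfies $f^n\in\mathcal{K}$ for some integer $n\ge1$. Then $$\operatorname{mult}\mathcal{K}\le n\,\operatorname{mult}\langle\mathcal{K},f\rangle .$$
   Context: $\mathcal{O}_p(\mathcal{L})$ denotes the ring of germs at a point $p$ of holomorphic functions on a two-dimensional complex manifold $\mathcal{L}$ (so $\mathcal{O}_p(\mathcal{L})\cong\mathbb{C}\{x,y\}$). For an ideal $\mathcal{I}\subset\mathcal{O}_p(\mathcal{L})$, $\operatorname{mult}\mathcal{I}=\dim_{\mathbb{C}}\mathcal{O}_p(\mathcal{L})/\mathcal{I}$; finite multiplicity means this dimension is finite. *)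

From HB Require Import structures.
From mathcomp Require Import all_boot all_order all_algebra.
From mathcomp Require Import complex reals.
Set Implicit Arguments. Unset Strict Implicit. Unset Printing Implicit Defensive.
Import Order.TTheory GRing.Theory Num.Theory.
Local Open Scope ring_scope.

(* A germ at p of a holomorphic function on a 2-dimensional complex manifold
   is, in local coordinates (x,y) centred at p, a convergent power series
   sum_{i,j} a i j x^i y^j, i.e. an element of C{x,y}. *)
Section PowerSeries.
Variable R : realType.
Local Notation C := R[i].

Definition series := nat -> nat -> C.

Definition convergent (a : series) : Prop :=
  exists r M : C, 0 < r /\ forall i j, `|a i j| * r ^+ (i + j) <= M.

Definition sadd (a b : series) : series := fun i j => a i j + b i j.
Definition sopp (a : series) : series := fun i j => - a i j.
Definition szero : series := fun _ _ => 0.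
Definition sone : series := fun i j => if (i == 0%N) && (j == 0%N) then 1 else 0.
Definition sscale (c : C) (a : series) : series := fun i j => c * a i j.
Definition smul (a b : series) : series := fun i j =>
  \sum_(k < i.+1) \sum_(l < j.+1) a k l * b (i - k)%N (j - l)%N.
Fixpoint spow (a : series) (n : nat) : series :=
  match n with 0 => sone | n'.+1 => smul a (spow a n') end.

Definition ideal (I : series -> Prop) : Prop :=
  [/\ (forall a, I a -> convergent a),
      I szero,
      (forall a b, I a -> I b -> I (sadd a b)) &
      (forall g a, convergent g -> I a -> I (smul g a))].

Definition ideal_add_gen (K : series -> Prop) (f : series) : series -> Prop :=
  fun h => exists k g, [/\ K k, convergent g & forall i j, h i j = sadd k (smul g f) i j].

Definition quot_spanned_by (I : series -> Prop) (m : nat) : Prop :=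
  exists e : 'I_m -> series, (forall k, convergent (e k)) /\
    forall g, convergent g -> exists c : 'I_m -> C,
      I (fun i j => g i j - \sum_(k < m) c k * e k i j).

(* mult I = dim_C O_p / I = m  (the quotient is finite dimensional of
   dimension m: it is spanned by m elements and by no fewer). *)
Definition has_mult (I : series -> Prop) (m : nat) : Prop :=
  quot_spanned_by I m /\ forall m', quot_spanned_by I m' -> (m <= m')%N.

Definition finite_mult (I : series -> Prop) : Prop := exists m, quot_spanned_by I m.

End PowerSeries.

From HB Require Import structures.
From mathcomp Require Import all_boot all_order all_algebra.
From mathcomp Require Import complex reals.
From mathcomp Require Import ring zify.
From Stdlib Require Import FunctionalExtensionality Classical Wf_nat.
Import Order.TTheory GRing.Theory Num.Theory.
Local Open Scope ring_scope.

(* If e_1, ..., e_m span O/<K, f>, then the products e_k f^j (k <= m, j < n)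
   span O/K: any g is congruent to a combination of the e_k plus h_1 f
   modulo K, the same applies to h_1, and so on; after n rounds the
   remainder is a multiple of f^n, which lies in K. *)

Section SeriesAlgebra.
Context {R : realType}.
Local Notation C := R[i].
Local Notation series := (series R).

Lemma pred_series_ext {P : series -> Prop} {a b : series} :
  P a -> (forall i j, a i j = b i j) -> P b.
Proof.
move=> Pa eq_ab; suff -> : b = a by [].
by apply: functional_extensionality => i; apply: functional_extensionality.
Qed.

Lemma smul_ext_le (a b a' b' : series) i j :
  (forall k l, (k <= i)%N -> (l <= j)%N -> a k l = a' k l /\ b k l = b' k l) ->
  smul a b i j = smul a' b' i j.
Proof.
move=> eq_le; apply: eq_bigr => k _; apply: eq_bigr => l _.
have [-> _] := eq_le k l (ltnSE (ltn_ord k)) (ltnSE (ltn_ord l)).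
by have [_ ->] := eq_le (i - k)%N (j - l)%N (leq_subr _ _) (leq_subr _ _).
Qed.

(* Commutativity and associativity of the Cauchy product are inherited from
   the polynomial ring C[x][y], through truncation below a large degree. *)
Definition series_of_poly (p : {poly {poly C}}) : series := fun k l => p`_k`_l.

Definition poly_of_series (N : nat) (a : series) : {poly {poly C}} :=
  \poly_(k < N) \poly_(l < N) a k l.

Lemma series_of_polyM (p q : {poly {poly C}}) i j :
  series_of_poly (p * q) i j = smul (series_of_poly p) (series_of_poly q) i j.
Proof.
rewrite /series_of_poly coefM coef_sum; apply: eq_bigr => k _.
by rewrite coefM.
Qed.

Lemma poly_of_seriesK N (a : series) k l :
  (k < N)%N -> (l < N)%N -> series_of_poly (poly_of_series N a) k l = a k l.
Proof. by move=> ltkN ltlN; rewrite /series_of_poly coef_poly ltkN coef_poly ltlN. Qed.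

Lemma smul_poly_of_series N (a b : series) i j : (i < N)%N -> (j < N)%N ->
  smul a b i j = series_of_poly (poly_of_series N a * poly_of_series N b) i j.
Proof.
move=> ltiN ltjN; rewrite series_of_polyM; apply: smul_ext_le => k l lek lel.
by rewrite !poly_of_seriesK // (leq_ltn_trans lek, leq_ltn_trans lel).
Qed.

Lemma smulC (a b : series) i j : smul a b i j = smul b a i j.
Proof.
have ltiN : (i < (i + j).+1)%N by rewrite ltnS leq_addr.
have ltjN : (j < (i + j).+1)%N by rewrite ltnS leq_addl.
by rewrite (smul_poly_of_series _ a b _ _ ltiN ltjN)
  (smul_poly_of_series _ b a _ _ ltiN ltjN) mulrC.
Qed.

Lemma smulA (a b c : series) i j :
  smul (smul a b) c i j = smul a (smul b c) i j.
Proof.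
set N := (i + j).+1.
have ltN k l : (k <= i)%N -> (l <= j)%N -> (k < N)%N /\ (l < N)%N.
  by move=> lek lel; split; rewrite ltnS; lia.
pose P := poly_of_series N.
transitivity (smul (series_of_poly (P a * P b)) (series_of_poly (P c)) i j).
  apply: smul_ext_le => k l lek lel; have [ltk ltl] := ltN k l lek lel.
  by rewrite poly_of_seriesK // -smul_poly_of_series.
transitivity (smul (series_of_poly (P a)) (series_of_poly (P b * P c)) i j); last first.
  apply: smul_ext_le => k l lek lel; have [ltk ltl] := ltN k l lek lel.
  by rewrite poly_of_seriesK // -smul_poly_of_series.
by rewrite -!series_of_polyM mulrA.
Qed.

Lemma smul0s (b : series) i j : smul (szero R) b i j = 0.
Proof. by rewrite /smul big1 // => k _; rewrite big1 // => l _; rewrite mul0r. Qed.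

Lemma smul1s (a : series) i j : smul (sone R) a i j = a i j.
Proof.
rewrite /smul big_ord_recl big_ord_recl /= /sone eqxx mul1r !subn0.
rewrite big1 ?addr0 => [|l _]; last by rewrite mul0r.
by rewrite big1 ?addr0 // => k _; rewrite big1 // => l _; rewrite mul0r.
Qed.

Lemma smuls1 (a : series) i j : smul a (sone R) i j = a i j.
Proof. by rewrite smulC smul1s. Qed.

Lemma smulDl (a a' b : series) i j :
  smul (sadd a a') b i j = smul a b i j + smul a' b i j.
Proof.
rewrite /smul -big_split; apply: eq_bigr => k _.
by rewrite -big_split; apply: eq_bigr => l _; rewrite mulrDl.
Qed.

Lemma smul_suml (T : finType) (c : T -> C) (x : T -> series) (b : series) i j :
  smul (fun k l => \sum_t c t * x t k l) b i j = \sum_t c t * smul (x t) b i j.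
Proof.
rewrite /smul; under [RHS]eq_bigr => t _ do rewrite mulr_sumr.
rewrite [RHS]exchange_big; apply: eq_bigr => k _.
under [RHS]eq_bigr => t _ do rewrite mulr_sumr.
rewrite [RHS]exchange_big; apply: eq_bigr => l _.
by rewrite mulr_suml; apply: eq_bigr => t _; rewrite mulrA.
Qed.

End SeriesAlgebra.

Section Convergence.
Context {R : realType}.
Local Notation C := R[i].
Local Notation series := (series R).

Definition coef_bound (a : series) (r M : C) := forall i j, `|a i j| * r ^+ (i + j) <= M.

Lemma coef_bound_ge0 {a : series} {r M : C} : coef_bound a r M -> 0 <= M.
Proof. by move/(_ 0%N 0%N); apply: le_trans; rewrite expr0 mulr1. Qed.

Lemma coef_bound_le {a : series} {r r' M : C} :
  0 <= r' -> r' <= r -> coef_bound a r M -> coef_bound a r' M.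
Proof.
move=> r'0 ler' bound i j; apply: le_trans (bound i j); apply: ler_wpM2l => //.
by apply: lerXn2r; rewrite ?nnegrE ?(le_trans r'0 ler').
Qed.

Lemma mulSS_leq_exp2 i j : (i.+1 * j.+1 <= 2 ^ (i + j))%N.
Proof. by rewrite expnD leq_mul // ltn_expl. Qed.

(* Each of the (i+1)(j+1) terms of the Cauchy product is bounded by
   M1 M2 / r^(i+j), and halving the radius absorbs their number. *)
Lemma coef_bound_smul {a b : series} {r M1 M2 : C} : 0 < r ->
  coef_bound a r M1 -> coef_bound b r M2 -> coef_bound (smul a b) (r / 2) (M1 * M2).
Proof.
move=> r0 bound_a bound_b i j.
have M10 := coef_bound_ge0 bound_a; have M20 := coef_bound_ge0 bound_b.
have pow2_gt0 : 0 < (2 : C) ^+ (i + j) by rewrite exprn_gt0.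
apply: le_trans (_ : \sum_(k < i.+1) \sum_(l < j.+1) (M1 * M2 / 2 ^+ (i + j)) <= _).
  apply: le_trans (_ : (\sum_(k < i.+1) \sum_(l < j.+1)
     `|a k l| * `|b (i - k)%N (j - l)%N|) * (r / 2) ^+ (i + j) <= _).
    apply: ler_wpM2r; first by rewrite exprn_ge0 // divr_ge0 ?ltW.
    apply: le_trans (ler_norm_sum _ _ _) _; apply: ler_sum => k _.
    apply: le_trans (ler_norm_sum _ _ _) _; apply: ler_sum => l _.
    by rewrite normrM.
  rewrite mulr_suml; apply: ler_sum => k _; rewrite mulr_suml; apply: ler_sum => l _.
  have [lek lel] := (ltnSE (ltn_ord k), ltnSE (ltn_ord l)).
  have -> : (i + j = (k + l) + ((i - k) + (j - l)))%N by lia.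
  rewrite expr_div_n mulrA exprD; apply: ler_wpM2r; first by rewrite invr_ge0 exprn_ge0.
  by rewrite mulrACA ler_pM ?mulr_ge0 ?exprn_ge0 ?(ltW r0).
under eq_bigr => k _ do rewrite sumr_const card_ord.
rewrite sumr_const card_ord -mulrnA -[X in X <= _]mulr_natr -mulrA.
apply: ler_piMr; first by rewrite mulr_ge0.
by rewrite mulrC ler_pdivrMr // mul1r -natrX ler_nat mulnC mulSS_leq_exp2.
Qed.

Lemma convergent_smul (a b : series) :
  convergent a -> convergent b -> convergent (smul a b).
Proof.
move=> [r1 [M1 [r10 bound_a]]] [r2 [M2 [r20 bound_b]]].
have [r [r0 ler1 ler2]] : exists r : C, [/\ 0 < r, r <= r1 & r <= r2].
  by case/orP: (real_leVge (gtr0_real r10) (gtr0_real r20)) => ?;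
    [exists r1 | exists r2].
exists (r / 2), (M1 * M2); split; first by rewrite divr_gt0.
apply: (coef_bound_smul r0).
  exact: (coef_bound_le (ltW r0) ler1 bound_a).
exact: (coef_bound_le (ltW r0) ler2 bound_b).
Qed.

Lemma convergent0 : convergent (szero R).
Proof. by exists 1, 0; split=> // i j; rewrite normr0 mul0r. Qed.

Lemma convergent1 : convergent (sone R).
Proof.
exists 1, 1; split=> [|i j]; first exact: ltr01.
by rewrite expr1n mulr1 /sone; case: ifP; rewrite ?normr1 ?normr0 ?ler01.
Qed.

Lemma convergent_spow (f : series) n : convergent f -> convergent (spow f n).
Proof.
move=> conv_f; elim: n => [|n IH] /=; first exact: convergent1.
exact: convergent_smul.
Qed.

End Convergence.

Section Multiplicity.
Context {R : realType}.
Local Notation series := (series R).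

Lemma has_mult_exists {I : series -> Prop} {m : nat} :
  quot_spanned_by I m -> exists mI, has_mult I mI.
Proof.
move=> span_m.
have [mI [[span_mI least] _]] := dec_inh_nat_subset_has_unique_least_element _
  (fun m => classic (quot_spanned_by I m)) (ex_intro _ m span_m).
by exists mI; split=> // m' /least /ssrnat.leP.
Qed.

Lemma quot_spanned_by_add_gen {K : series -> Prop} (f : series) {m : nat} :
  quot_spanned_by K m -> quot_spanned_by (ideal_add_gen K f) m.
Proof.
move=> [e [conv_e span_e]]; exists e; split=> // g conv_g.
have [c Kc] := span_e g conv_g; exists c.
exists (fun i j => g i j - \sum_(k < m) c k * e k i j), (szero R).
split=> // [|i j]; first exact: convergent0.
by rewrite /sadd smul0s addr0.
Qed.

Lemma quot_spanned_by_card (K : series -> Prop) (T : finType) (e : T -> series) :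
  (forall t, convergent (e t)) ->
  (forall g, convergent g -> exists c : T -> R[i],
     K (fun i j => g i j - \sum_t c t * e t i j)) ->
  quot_spanned_by K #|T|.
Proof.
move=> conv_e span_e; exists (fun k => e (enum_val k)); split=> [k|g conv_g].
  exact: conv_e.
have [c Kc] := span_e g conv_g; exists (fun k => c (enum_val k)).
apply: (pred_series_ext Kc) => i j; congr (_ - _).
by rewrite (reindex (enum_val : 'I_#|T| -> T)) //; apply: onW_bij; exact: enum_val_bij.
Qed.

End Multiplicity.

Lemma sum_pair_at_fst {S : semiRingType} {I J : finType} (i0 : I) (d : J -> S)
    (F : I -> J -> S) :
  \sum_(t : I * J) (if t.1 == i0 then d t.2 else 0) * F t.1 t.2 =
  \sum_k d k * F i0 k.
Proof.
rewrite -(pair_bigA _ (fun i k => (if i == i0 then d k else 0) * F i k)) /=.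
rewrite (bigD1 i0) //= eqxx [X in _ + X]big1 ?addr0 // => i /negbTE ->.
by rewrite big1 // => k _; rewrite mul0r.
Qed.

Section PowerProducts.
Context {R : realType} {K : series R -> Prop} {f : series R} {n m : nat}.
Context {e : 'I_m -> series R}.
Hypotheses (idealK : ideal K) (conv_f : convergent f).
Hypothesis conv_e : forall k, convergent (e k).
Hypothesis span_e : forall g, convergent g -> exists c : 'I_m -> R[i],
  ideal_add_gen K f (fun i j => g i j - \sum_(k < m) c k * e k i j).

Definition power_product (t : 'I_n * 'I_m) : series R := smul (e t.2) (spow f t.1).

Lemma convergent_power_product t : convergent (power_product t).
Proof. exact/convergent_smul/convergent_spow. Qed.

Lemma reduce_mod_power j : (j <= n)%N -> forall g, convergent g ->
  exists (c : 'I_n * 'I_m -> R[i]) h, convergent h /\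
    K (fun x y => g x y - \sum_t c t * power_product t x y - smul h (spow f j) x y).
Proof.
case: idealK => _ K0 KD KM.
elim: j => [|j IH] lejn g conv_g.
  exists (fun _ => 0), g; split=> //; apply: (pred_series_ext K0) => x y.
  by rewrite smuls1 big1 ?subr0 ?subrr // => t _; rewrite mul0r.
have [c [h [conv_h Kh]]] := IH (ltnW lejn) g conv_g.
have [d [k [h' [Kk conv_h' h_eq]]]] := span_e h conv_h.
pose ord_j : 'I_n := Ordinal lejn.
exists (fun t => c t + (if t.1 == ord_j then d t.2 else 0)), h'; split=> //.
have Kkfj : K (smul (spow f j) k) by apply: KM => //; exact: convergent_spow.
apply: (pred_series_ext (KD _ _ Kh Kkfj)) => x y.
have h_fj : smul h (spow f j) x y = \sum_t d t * smul (e t) (spow f j) x y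
    + smul k (spow f j) x y + smul h' (spow f j.+1) x y.
  rewrite (@smul_ext_le _ h _ (sadd (fun i l => \sum_t d t * e t i l)
                (sadd k (smul h' f))) (spow f j)); last first.
    by move=> i l _ _; split=> //; rewrite {1}/sadd -h_eq; ring.
  by rewrite smulDl smul_suml smulDl -addrA smulA.
have sum_split : \sum_t (c t + (if t.1 == ord_j then d t.2 else 0)) * power_product t x y
    = \sum_t c t * power_product t x y + \sum_k d k * smul (e k) (spow f j) x y.
  rewrite -(sum_pair_at_fst ord_j d (fun i k => smul (e k) (spow f i) x y)) -big_split /=.
  by apply: eq_bigr => t _; rewrite mulrDl.
by rewrite /sadd h_fj sum_split (@smulC _ k); ring.
Qed.

Lemma quot_spanned_by_power_products :
  K (spow f n) -> quot_spanned_by K (n * m).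
Proof.
case: idealK => _ _ KD KM Kfn.
rewrite -[n]card_ord -[m]card_ord -card_prod.
apply: quot_spanned_by_card convergent_power_product _ => g conv_g.
have [c [h [conv_h Kh]]] := reduce_mod_power n (leqnn n) g conv_g.
exists c; apply: (pred_series_ext (KD _ _ Kh (KM _ _ conv_h Kfn))) => x y.
by rewrite /sadd subrK.
Qed.

End PowerProducts.

Theorem mainTheorem2 (R : realType) (K : series R -> Prop) (f : series R) (n : nat) :
  ideal K -> finite_mult K ->
  convergent f -> (1 <= n)%N -> K (spow f n) ->
  exists mK mKf : nat,
    [/\ has_mult K mK, has_mult (ideal_add_gen K f) mKf & (mK <= n * mKf)%N].
Proof.
move=> idealK [m spanK] conv_f _ Kfn.
have [mK multK] := has_mult_exists spanK.
have [mKf multKf] := has_mult_exists (quot_spanned_by_add_gen f spanK).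
exists mK, mKf; split=> //.
have [[e [conv_e span_e]] _] := multKf.
apply: multK.2.
exact: (quot_spanned_by_power_products idealK conv_f conv_e span_e Kfn).
Qed.
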